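(* Let $M>0$, $\Delta>0$, $\theta\ge0$, and let $P\in\mathcal P(\Delta,\theta,M)$ with $u=dP/dP_0-1$. Define $\eta^2_\varrho(P,P_0)=\sum_{k\ge1}\frac{\lambda_k}{\lambda_k+\varrho^2}\big[\mathbb E_P\varphi_k(X)\big]^2$. (a) If $\theta=0$ and $0<\varrho\le\sqrt{\Delta/(2M^2)}$, then $\eta^2_\varrho(P,P_0)\ge\frac12\|u\|^2_{L_2(P_0)}\ge\frac12\Delta$. (b) If $\theta>0$ and $0<\varrho\le\frac{1}{2\sqrt2}(2M)^{-\theta}\Delta^{\frac{1+\theta}{2}}$, then $\eta^2_\varrho(P,P_0)\ge\frac14\|u\|^2_{L_2(P_0)}\ge\frac14\Delta$.
   Context: $P_0$ is a probability measure on $(\mathcal X,\mathcal B)$ and $K$ a kernel with Mercer decomposition $K(x,x')=\sum_{k\ge1}\lambda_k\varphi_k(x)\varphi_k(x')$, $\lambda_1>\lambda_2>\cdots>0$, where $\{\varphi_k\}$ is an orthonormal basis of the $P_0$-mean-zero functions in $L_2(P_0)$. $\mathcal H(K)$ is the RKHS of $K$ with $\|f\|_K^2=\sum_k\lambda_k^{-1}\langle f,\varphi_k\rangle_{L_2(P_0)}^2$. $\mathcal F(\theta;M)$ ($\theta>0$) is the set of $f\in L_2(P_0)$ such that for every $R>0$ there is $f_R\in\mathcal H(K)$ with $\|f_R\|_K\le R$ and $\|f-f_R\|_{L_2(P_0)}\le MR^{-1/\theta}$; $\mathcal F(0;M)=\{f\in\mathcal H(K):\|f\|_K\le M\}$.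 $\mathcal P(\Delta,\theta,M)$ is the set of probability measures $P\ll P_0$ with $u=dP/dP_0-1\in\mathcal F(\theta;M)$ and $\|u\|^2_{L_2(P_0)}\ge\Delta$. Note $\mathbb E_P\varphi_k(X)=\langle u,\varphi_k\rangle_{L_2(P_0)}$. *)

From Stdlib Require Import Reals.
Open Scope R_scope.

(* Coefficient model of L2_0(P0) via the orthonormal basis (phi_k):
   a function f in the closed span is identified with its coefficient
   sequence k |-> <f, phi_k>_{L2(P0)}  (index k = 0 here is phi_1 of the paper).
   By Parseval, ||f||^2_{L2(P0)} = sum_k <f,phi_k>^2. *)

Definition sqsum (a : nat -> R) (s : R) : Prop :=
  infinite_sum (fun k => (a k) ^ 2) s.

Definition L2dist_le (a b : nat -> R) (c : R) : Prop :=
  exists s, sqsum (fun k => a k - b k) s /\ sqrt s <= c.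

(* f in H(K) and ||f||_K <= R, with ||f||_K^2 = sum_k lambda_k^{-1} <f,phi_k>^2 *)
Definition Knorm_le (lam : nat -> R) (b : nat -> R) (Rad : R) : Prop :=
  exists s, infinite_sum (fun k => (b k) ^ 2 / lam k) s /\ sqrt s <= Rad.

Definition F0 (lam : nat -> R) (M : R) (a : nat -> R) : Prop :=
  Knorm_le lam a M.

Definition Fpos (lam : nat -> R) (theta M : R) (a : nat -> R) : Prop :=
  (exists s, sqsum a s) /\
  forall Rad, 0 < Rad ->
    exists b, Knorm_le lam b Rad /\ L2dist_le a b (M * Rpower Rad (- / theta)).

Definition inF (lam : nat -> R) (theta M : R) (a : nat -> R) : Prop :=
  (theta = 0 -> F0 lam M a) /\ (0 < theta -> Fpos lam theta M a).

(* P in P(Delta, theta, M), expressed through u = dP/dP0 - 1 *)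
Definition inP (lam : nat -> R) (Delta theta M : R) (a : nat -> R) : Prop :=
  inF lam theta M a /\ exists s, sqsum a s /\ Delta <= s.

(* eta^2_rho(P,P0) = sum_k lambda_k/(lambda_k + rho^2) (E_P phi_k)^2, with E_P phi_k = a k *)
Definition eta_sq (lam : nat -> R) (rho : R) (a : nat -> R) (eta : R) : Prop :=
  infinite_sum (fun k => lam k / (lam k + rho ^ 2) * (a k) ^ 2) eta.

(* The missing mass [s - eta = sum_k rho^2/(lambda_k + rho^2) a_k^2] is the bias of
   the regularised discrepancy.  It is at most [rho^2 ||f||_K^2] for a function f in
   H(K) and at most [2 ||a - b||^2 + 2 rho^2 ||b||_K^2] when a is only approximated by
   b in H(K).  For theta = 0 the first bound with ||u||_K <= M gives a loss of at most
   Delta/2; for theta > 0 the approximation at radius [R = (2M/sqrt Delta)^theta] has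
   error sqrt Delta / 2, and the constraint on rho makes [rho R <= sqrt Delta/(2 sqrt 2)],
   so the loss is at most 3 Delta/4.  Since Delta <= s, this is the claim. *)

From Stdlib Require Import Reals Lra Psatz.
Open Scope R_scope.

Lemma infinite_sum_le (f g : nat -> R) (l1 l2 : R) :
  (forall k, f k <= g k) -> infinite_sum f l1 -> infinite_sum g l2 -> l1 <= l2.
Proof.
  intros Hfg Hf Hg.
  apply (Rle_cv_lim (Un := sum_f_R0 f) (Vn := sum_f_R0 g)); [|exact Hf|exact Hg].
  intro n; apply sum_Rle; auto.
Qed.

Lemma infinite_sum_plus (f g : nat -> R) (l1 l2 : R) :
  infinite_sum f l1 -> infinite_sum g l2 ->
  infinite_sum (fun k => f k + g k) (l1 + l2).
Proof.
  intros Hf Hg e He.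
  destruct (CV_plus _ _ _ _ Hf Hg e He) as [N HN].
  exists N; intros n Hn; rewrite sum_plus; apply HN; exact Hn.
Qed.

Lemma infinite_sum_scal (c : R) (f : nat -> R) (l : R) :
  infinite_sum f l -> infinite_sum (fun k => c * f k) (c * l).
Proof.
  intros Hf e He.
  assert (Hc : Un_cv (fun _ => c) c).
  { intros e' He'; exists 0%nat; intros; unfold Rdist; rewrite Rminus_diag, Rabs_R0; lra. }
  destruct (CV_mult _ _ _ _ Hc Hf e He) as [N HN].
  exists N; intros n Hn.
  replace (sum_f_R0 (fun k => c * f k) n) with (c * sum_f_R0 f n).
  - apply HN; exact Hn.
  - clear Hn; induction n as [|n IH]; simpl; [|rewrite <- IH]; ring.
Qed.

Lemma sq_le_of_sqrt_le (x c : R) : 0 <= c -> sqrt x <= c -> x <= c ^ 2.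
Proof.
  intros Hc Hx. destruct (Rle_lt_dec 0 x) as [Hx0|Hx0]; [|nra].
  rewrite <- (pow2_sqrt x Hx0). apply pow_incr; split; [apply sqrt_pos|exact Hx].
Qed.

Lemma shrink_weight_bounds (l r2 : R) : 0 < l -> 0 <= r2 ->
  0 <= l / (l + r2) <= 1.
Proof.
  intros Hl Hr. split.
  - apply Rle_mult_inv_pos; lra.
  - apply Rmult_le_reg_r with (l + r2); [lra|].
    unfold Rdiv; rewrite Rmult_assoc, Rinv_l; lra.
Qed.

Lemma shrink_loss_le (l r2 x : R) : 0 < l -> 0 <= r2 ->
  x ^ 2 - l / (l + r2) * x ^ 2 <= r2 * (x ^ 2 / l).
Proof.
  intros Hl Hr.
  replace (x ^ 2 - l / (l + r2) * x ^ 2) with (x ^ 2 * (r2 / (l + r2))) by (field; lra).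
  replace (r2 * (x ^ 2 / l)) with (x ^ 2 * (r2 / l)) by (field; lra).
  apply Rmult_le_compat_l; [apply pow2_ge_0|].
  unfold Rdiv; apply Rmult_le_compat_l; [lra|].
  apply Rinv_le_contravar; lra.
Qed.

Lemma shrink_loss_le_approx (l r2 x y : R) : 0 < l -> 0 <= r2 ->
  x ^ 2 - l / (l + r2) * x ^ 2 <= 2 * (x - y) ^ 2 + 2 * (r2 * (y ^ 2 / l)).
Proof.
  intros Hl Hr.
  destruct (shrink_weight_bounds l r2 Hl Hr) as [Hw0 Hw1].
  pose proof (shrink_loss_le l r2 y Hl Hr) as Hy.
  set (w := l / (l + r2)) in *.
  assert (Hxy : x ^ 2 <= 2 * (x - y) ^ 2 + 2 * y ^ 2)
    by (pose proof (pow2_ge_0 (x - 2 * y)); nra).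
  assert (Hloss : (1 - w) * x ^ 2 <= (1 - w) * (2 * (x - y) ^ 2 + 2 * y ^ 2))
    by (apply Rmult_le_compat_l; lra).
  assert ((1 - w) * (x - y) ^ 2 <= (x - y) ^ 2)
    by (pose proof (pow2_ge_0 (x - y)); nra).
  lra.
Qed.

Section Deficit.

Variables (lam : nat -> R) (a : nat -> R) (rho s eta : R).
Hypothesis lam_pos : forall k, 0 < lam k.
Hypothesis sqsum_a : sqsum a s.
Hypothesis eta_a : eta_sq lam rho a eta.

Lemma eta_deficit_le (g : nat -> R) (G : R) :
  infinite_sum g G ->
  (forall k, a k ^ 2 - lam k / (lam k + rho ^ 2) * a k ^ 2 <= g k) ->
  s - eta <= G.
Proof.
  intros HG Hg.
  replace (s - eta) with (s + -1 * eta) by ring.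
  refine (infinite_sum_le _ g _ _ _
            (infinite_sum_plus _ _ _ _ sqsum_a (infinite_sum_scal (-1) _ _ eta_a)) HG).
  intro k; specialize (Hg k); lra.
Qed.

Lemma eta_deficit_le_Knorm (Rad : R) :
  0 <= Rad -> Knorm_le lam a Rad -> s - eta <= rho ^ 2 * Rad ^ 2.
Proof.
  intros HRad [t [Ht HtRad]].
  apply sq_le_of_sqrt_le in HtRad; [|exact HRad].
  apply Rle_trans with (rho ^ 2 * t).
  - apply (eta_deficit_le _ _ (infinite_sum_scal _ _ _ Ht)).
    intro k; apply shrink_loss_le; [apply lam_pos|apply pow2_ge_0].
  - apply Rmult_le_compat_l; [apply pow2_ge_0|exact HtRad].
Qed.

Lemma eta_deficit_le_approx (b : nat -> R) (Rad e : R) :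
  0 <= Rad -> 0 <= e -> Knorm_le lam b Rad -> L2dist_le a b e ->
  s - eta <= 2 * e ^ 2 + 2 * (rho ^ 2 * Rad ^ 2).
Proof.
  intros HRad He [t [Ht HtRad]] [D [HD HDe]].
  apply sq_le_of_sqrt_le in HtRad; [|exact HRad].
  apply sq_le_of_sqrt_le in HDe; [|exact He].
  apply Rle_trans with (2 * D + 2 * (rho ^ 2 * t)).
  - apply (eta_deficit_le _ _ (infinite_sum_plus _ _ _ _
             (infinite_sum_scal 2 _ _ HD)
             (infinite_sum_scal 2 _ _ (infinite_sum_scal (rho ^ 2) _ _ Ht)))).
    intro k; apply shrink_loss_le_approx; [apply lam_pos|apply pow2_ge_0].
  - pose proof (pow2_ge_0 rho).
    assert (rho ^ 2 * t <= rho ^ 2 * Rad ^ 2) by (apply Rmult_le_compat_l; lra).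
    lra.
Qed.

End Deficit.

Lemma eta_sq_exists (lam a : nat -> R) (rho s : R) :
  (forall k, 0 < lam k) -> sqsum a s -> exists eta, eta_sq lam rho a eta.
Proof.
  intros Hlam Ha.
  destruct (Rseries_CV_comp (fun k => lam k / (lam k + rho ^ 2) * a k ^ 2)
              (fun k => a k ^ 2)) as [eta Heta].
  - intro k.
    destruct (shrink_weight_bounds (lam k) (rho ^ 2) (Hlam k) (pow2_ge_0 rho))
      as [Hw0 Hw1].
    pose proof (pow2_ge_0 (a k)). split; nra.
  - exists s; exact Ha.
  - exists eta; exact Heta.
Qed.

Lemma approx_error_at_radius (M Delta theta : R) :
  0 < M -> 0 < Delta -> 0 < theta ->
  M * Rpower (Rpower (2 * M / sqrt Delta) theta) (- / theta) = sqrt Delta / 2.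
Proof.
  intros HM HDelta Htheta.
  assert (HsD : 0 < sqrt Delta) by (apply sqrt_lt_R0; exact HDelta).
  rewrite Rpower_mult.
  replace (theta * - / theta) with (- (1)) by (field; lra).
  rewrite Rpower_Ropp, Rpower_1 by (apply Rdiv_lt_0_compat; lra).
  field; lra.
Qed.

Lemma Rpower_radius_balance (c Delta theta : R) : 0 < c -> 0 < Delta ->
  Rpower c (- theta) * Rpower Delta ((1 + theta) / 2) * Rpower (c / sqrt Delta) theta
  = sqrt Delta.
Proof.
  intros Hc HDelta.
  assert (HsD : 0 < sqrt Delta) by (apply sqrt_lt_R0; exact HDelta).
  assert (Hln_Delta : ln Delta = 2 * ln (sqrt Delta)).
  { rewrite <- (sqrt_sqrt Delta) at 1 by lra. rewrite ln_mult by lra. ring. }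
  assert (Hln_div : ln (c / sqrt Delta) = ln c - ln (sqrt Delta)).
  { unfold Rdiv; rewrite ln_mult, ln_Rinv by (try apply Rinv_0_lt_compat; lra). ring. }
  unfold Rpower. rewrite <- !exp_plus, Hln_Delta, Hln_div.
  rewrite <- (exp_ln (sqrt Delta) HsD) at 3.
  f_equal; field.
Qed.

Lemma eta_sq_ge_half (lam a : nat -> R) (M Delta rho s eta : R) :
  (forall k, 0 < lam k) -> 0 < M -> 0 < Delta -> Delta <= s ->
  sqsum a s -> eta_sq lam rho a eta -> F0 lam M a ->
  0 < rho <= sqrt (Delta / (2 * M ^ 2)) -> eta >= s / 2.
Proof.
  intros Hlam HM HDelta HDs Ha Heta HF [Hrho Hrho_le].
  pose proof (eta_deficit_le_Knorm lam a rho s eta Hlam Ha Heta M (Rlt_le _ _ HM) HF).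
  assert (Hrho2 : rho ^ 2 <= Delta / (2 * M ^ 2)).
  { rewrite <- (pow2_sqrt (Delta / (2 * M ^ 2))) by (apply Rle_mult_inv_pos; nra).
    apply pow_incr; lra. }
  assert (rho ^ 2 * M ^ 2 <= Delta / 2).
  { apply Rle_trans with (Delta / (2 * M ^ 2) * M ^ 2).
    - apply Rmult_le_compat_r; [apply pow2_ge_0|exact Hrho2].
    - right; field; lra. }
  lra.
Qed.

Lemma eta_sq_ge_quarter (lam a : nat -> R) (M Delta theta rho s eta : R) :
  (forall k, 0 < lam k) -> 0 < M -> 0 < Delta -> 0 < theta -> Delta <= s ->
  sqsum a s -> eta_sq lam rho a eta -> Fpos lam theta M a ->
  0 < rho <= / (2 * sqrt 2) * Rpower (2 * M) (- theta) * Rpower Delta ((1 + theta) / 2) ->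
  eta >= s / 4.
Proof.
  intros Hlam HM HDelta Htheta HDs Ha Heta [_ Happrox] [Hrho Hrho_le].
  assert (HsD : 0 < sqrt Delta) by (apply sqrt_lt_R0; exact HDelta).
  assert (Hs2 : 0 < sqrt 2) by (apply sqrt_lt_R0; lra).
  set (Rad := Rpower (2 * M / sqrt Delta) theta).
  assert (HRad : 0 < Rad) by apply exp_pos.
  destruct (Happrox Rad HRad) as [b [Hb Hab]].
  assert (Herr : M * Rpower Rad (- / theta) = sqrt Delta / 2)
    by (apply approx_error_at_radius; assumption).
  rewrite Herr in Hab.
  pose proof (eta_deficit_le_approx lam a rho s eta Hlam Ha Heta b Rad (sqrt Delta / 2)
                (Rlt_le _ _ HRad) ltac:(lra) Hb Hab) as Hdeficit.
  assert (HrhoRad : rho * Rad <= sqrt Delta / (2 * sqrt 2)).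
  { pose proof (Rpower_radius_balance (2 * M) Delta theta ltac:(lra) HDelta) as Hbal.
    fold Rad in Hbal.
    apply Rle_trans with
      (/ (2 * sqrt 2) * Rpower (2 * M) (- theta) * Rpower Delta ((1 + theta) / 2) * Rad).
    - apply Rmult_le_compat_r; lra.
    - right; rewrite <- Hbal; field; lra. }
  assert (Hsq : (sqrt Delta / (2 * sqrt 2)) ^ 2 = Delta / 8).
  { replace ((sqrt Delta / (2 * sqrt 2)) ^ 2) with (sqrt Delta ^ 2 / (4 * sqrt 2 ^ 2))
      by (field; lra).
    rewrite !pow2_sqrt by lra. field. }
  assert (rho ^ 2 * Rad ^ 2 <= Delta / 8).
  { rewrite <- Hsq, <- Rpow_mult_distr. apply pow_incr. split; [nra|exact HrhoRad]. }
  assert ((sqrt Delta / 2) ^ 2 = Delta / 4)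
    by (replace ((sqrt Delta / 2) ^ 2) with (sqrt Delta ^ 2 / 4) by field;
        rewrite pow2_sqrt by lra; field).
  lra.
Qed.

Theorem mainTheorem9
  (lam : nat -> R) (Hlam_pos : forall k, 0 < lam k)
  (Hlam_dec : forall k, lam (S k) < lam k)
  (M Delta theta : R) (HM : 0 < M) (HDelta : 0 < Delta) (Htheta : 0 <= theta)
  (a : nat -> R) (HP : inP lam Delta theta M a)
  (s : R) (Hs : sqsum a s) (rho : R) :
  (theta = 0 -> 0 < rho <= sqrt (Delta / (2 * M ^ 2)) ->
     exists eta, eta_sq lam rho a eta /\ eta >= s / 2 /\ s / 2 >= Delta / 2) /\
  (0 < theta ->
     0 < rho <= / (2 * sqrt 2) * Rpower (2 * M) (- theta) * Rpower Delta ((1 + theta) / 2) ->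
     exists eta, eta_sq lam rho a eta /\ eta >= s / 4 /\ s / 4 >= Delta / 4).
Proof.
  destruct HP as [[HF0 HFpos] [s' [Hs' HDs]]].
  rewrite (uniqueness_sum _ _ _ Hs' Hs) in HDs.
  destruct (eta_sq_exists lam a rho s Hlam_pos Hs) as [eta Heta].
  split; intros Htheta' Hrho; exists eta; (split; [exact Heta|split; [|lra]]).
  - exact (eta_sq_ge_half lam a M Delta rho s eta Hlam_pos HM HDelta HDs Hs Heta
             (HF0 Htheta') Hrho).
  - exact (eta_sq_ge_quarter lam a M Delta theta rho s eta Hlam_pos HM HDelta Htheta'
             HDs Hs Heta (HFpos Htheta') Hrho).
Qed.
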